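(* Let $(A,C,k)$ be an instance and $W$ an affordable committee. Let $\overline{W}$ be obtained from $W$ by seq-CC completion. Then the representation ratio of $\overline{W}$ is at least $1-\frac1e$.
   Context: An instance $(A,C,k)$ consists of a finite nonempty candidate set $C$, voters $N=\{1,\dots,n\}$, approval sets $A_i\subseteq C$, and a committee size $1\le k\le|C|$. A committee is $W\subseteq C$ with $|W|\le k$. $\mathrm{cov}(W)=|\{i: A_i\cap W\ne\emptyset\}|$; the representation ratio is $\mathrm{cov}(W)/\max\{\mathrm{cov}(W'):|W'|=k\}$. The seq-CC completion of $W$ repeatedly adds to the current committee a candidate $c$ not in it that maximizes $\mathrm{cov}$ of the committee with $c$ added (ties arbitrary), until the committee has size $k$. $W$ is affordable if there are $p_i:C\to\mathbb{R}_{\ge0}$ ($i\in N$) with $p_i(c)=0$ for $c\notin A_i$, $\sum_c p_i(c)\le k/n$, $\sum_i p_i(c)=1$ for $c\in W$, $\sum_i p_i(c)=0$ for $c\notin W$. *)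

From HB Require Import structures.
From mathcomp Require Import all_boot all_order all_algebra.
From mathcomp Require Import all_classical all_reals.
From mathcomp Require Import sequences exp.
Set Implicit Arguments. Unset Strict Implicit. Unset Printing Implicit Defensive.
Import Order.TTheory GRing.Theory Num.Theory.
Local Open Scope ring_scope.

Section Defs.
Variables (C : finType) (n : nat) (A : 'I_n -> {set C}).

Definition cov (W : {set C}) : nat := #|[set i : 'I_n | [exists c in W, c \in A i]]|.

Definition maxcov (k : nat) : nat := (\max_(W' : {set C} | #|W'| == k) cov W')%N.

Definition affordable (R : realType) (k : nat) (W : {set C}) : Prop :=
  exists p : 'I_n -> C -> R,
    [/\ forall i c, 0 <= p i c,
        forall i c, c \notin A i -> p i c = 0,
        forall i, \sum_(c : C) p i c <= k%:R / n%:R,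
        forall c, c \in W -> \sum_(i < n) p i c = 1 &
        forall c, c \notin W -> \sum_(i < n) p i c = 0].

(* seqcc_completion k S T : T is a possible outcome (with arbitrary
   tie-breaking) of the seq-CC completion of S to size k. *)
Inductive seqcc_completion (k : nat) : {set C} -> {set C} -> Prop :=
| seqcc_done (S : {set C}) : #|S| = k -> seqcc_completion k S S
| seqcc_step (S : {set C}) (c : C) (T : {set C}) :
    (#|S| < k)%N -> c \notin S ->
    (forall c', c' \notin S -> (cov (c' |: S) <= cov (c |: S))%N) ->
    seqcc_completion k (c |: S) T -> seqcc_completion k S T.
End Defs.

From HB Require Import structures.
From mathcomp Require Import all_boot all_order all_algebra.
From mathcomp Require Import all_classical all_reals.
From mathcomp Require Import sequences exp.
From mathcomp Require Import ring lra.
Import Order.TTheory GRing.Theory Num.Theory.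
Set Implicit Arguments. Unset Strict Implicit. Unset Printing Implicit Defensive.
Local Open Scope ring_scope.

(** Let [M] be the optimal coverage with [k] candidates and [q = 1 - 1/k].
   Since any [k] candidates cover at most [M] voters, the greedy candidate
   added to [S] gains at least [(M - cov S)/k], so every greedy step multiplies
   the gap [M - cov S] by at most [q].  An affordable [W] of size [w] has
   [cov W >= w n / k >= w M / k], i.e. a gap of at most
   [M (1 - w/k) <= M q^w] by Bernoulli's inequality.  After the remaining
   [k - w] greedy steps the gap is at most [M q^k <= M / e]. *)

Lemma card_bigcup_le {I : Type} {T : finType} (r : seq I) (P : pred I)
    (F : I -> {set T}) :
  (#|\bigcup_(i <- r | P i) F i| <= \sum_(i <- r | P i) #|F i|)%N.
Proof.
elim/big_ind2: _ => [|m X l Y Xm Yl|//]; first by rewrite cards0.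
by rewrite (leq_trans (leq_card_setU X Y)) ?leq_add.
Qed.

Section Coverage.
Variables (C : finType) (n : nat) (A : 'I_n -> {set C}).

Definition covered (W : {set C}) : {set 'I_n} :=
  [set i | [exists c in W, c \in A i]].

Lemma covE (W : {set C}) : cov A W = #|covered W|.
Proof. by []. Qed.

Lemma coveredS (S T : {set C}) : S \subset T -> covered S \subset covered T.
Proof.
move=> ST; apply/fintype.subsetP => i; rewrite !inE => /existsP [c /andP [cS ci]].
by apply/existsP; exists c; rewrite (fintype.subsetP ST).
Qed.

Lemma leq_cov (S T : {set C}) : S \subset T -> (cov A S <= cov A T)%N.
Proof. by move=> ST; rewrite !covE subset_leq_card // coveredS. Qed.

Lemma cov_le_n (W : {set C}) : (cov A W <= n)%N.
Proof. by rewrite covE (leq_trans (max_card _)) ?card_ord. Qed.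

Lemma maxcov_le_n (k : nat) : (maxcov A k <= n)%N.
Proof. by apply/bigmax_leqP => W _; apply: cov_le_n. Qed.

Lemma card_covered_setU1D (o : C) (S : {set C}) :
  #|covered (o |: S) :\: covered S| = (cov A (o |: S) - cov A S)%N.
Proof. by rewrite cardsDS // coveredS // finset.subsetUr. Qed.

Lemma covered_sub_gains (S O : {set C}) :
  covered O \subset
    covered S :|: \bigcup_(o in O) (covered (o |: S) :\: covered S).
Proof.
apply/fintype.subsetP => i iO; rewrite inE; case: (boolP (i \in covered S)) => //= iS.
move: iO; rewrite inE => /existsP [o /andP [oO oi]].
apply/finset.bigcupP; exists o => //; rewrite finset.in_setD iS /= inE.
by apply/existsP; exists o; rewrite !inE eqxx oi.
Qed.

Section GreedyStep.
Variables (S : {set C}) (c : C).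
Hypothesis c_greedy :
  forall c', c' \notin S -> (cov A (c' |: S) <= cov A (c |: S))%N.

Lemma greedy_gain_max (o : C) :
  (cov A (o |: S) - cov A S <= cov A (c |: S) - cov A S)%N.
Proof.
case: (boolP (o \in S)) => oS; last by rewrite leq_sub2r // c_greedy.
by rewrite (finset.setUidPr _) ?subnn // finset.sub1set.
Qed.

Lemma cov_le_greedy_gain (k : nat) (O : {set C}) : (#|O| <= k)%N ->
  (cov A O <= cov A S + k * (cov A (c |: S) - cov A S))%N.
Proof.
move=> Ok; rewrite covE; apply: leq_trans (subset_leq_card (covered_sub_gains S O)) _.
apply: leq_trans (leq_card_setU _ _) _; rewrite -covE leq_add2l.
apply: leq_trans (card_bigcup_le _ _ _) _.
have gain_le o : o \in O ->
    (#|covered (o |: S) :\: covered S| <= cov A (c |: S) - cov A S)%N.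
  by rewrite card_covered_setU1D greedy_gain_max.
apply: leq_trans (leq_sum _ gain_le) _.
by rewrite sum_nat_const leq_mul2r Ok orbT.
Qed.

Lemma maxcov_le_greedy_gain (k : nat) :
  (maxcov A k <= cov A S + k * (cov A (c |: S) - cov A S))%N.
Proof. by apply/bigmax_leqP => O /eqP Ok; rewrite cov_le_greedy_gain ?Ok. Qed.

End GreedyStep.
End Coverage.

Lemma bernoulli_ineq (R : realDomainType) (x : R) (w : nat) :
  -1 <= x -> 1 + w%:R * x <= (1 + x) ^+ w.
Proof.
move=> x_ge; elim: w => [|w IH]; first by rewrite mul0r addr0 expr0.
have x2_ge0 : 0 <= w%:R * x * x by rewrite -mulrA mulr_ge0 // -expr2 sqr_ge0.
rewrite exprSr -natr1; apply: le_trans (ler_wpM2r _ IH); lra.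
Qed.

Lemma exprn_le_expR (R : realType) (x : R) (k : nat) :
  -1 <= x -> (1 + x) ^+ k <= expR (k%:R * x).
Proof.
move=> x_ge; rewrite expRM_natl lerXn2r ?nnegrE ?expR_ge0 ?expR_ge1Dx //; lra.
Qed.

Section Guarantee.
Variables (R : realType) (C : finType) (n : nat) (A : 'I_n -> {set C}) (k : nat).
Hypothesis k_gt0 : (0 < k)%N.

Let M : R := (maxcov A k)%:R.
Let q : R := 1 - k%:R^-1.

Lemma natr_mulV : k%:R * k%:R^-1 = 1 :> R.
Proof. by rewrite mulfV // pnatr_eq0 -lt0n. Qed.

Lemma q_ge0 : 0 <= q.
Proof. by rewrite subr_ge0 invf_le1 ?ltr0n // ler1n. Qed.

Lemma greedy_gap (S : {set C}) (c : C) :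
  (forall c', c' \notin S -> (cov A (c' |: S) <= cov A (c |: S))%N) ->
  M - (cov A (c |: S))%:R <= q * (M - (cov A S)%:R).
Proof.
move=> c_greedy; have := maxcov_le_greedy_gain c_greedy k.
rewrite -(ler_nat R) natrD natrM natrB ?leq_cov ?finset.subsetUr // -/M.
move: (cov A S)%:R (cov A (c |: S))%:R => s s' hM.
have := ler_wpM2l (_ : 0 <= k%:R^-1 :> R) hM; rewrite ?invr_ge0 ?ler0n //.
rewrite mulrDr mulrA [_ * k%:R]mulrC natr_mulV mul1r /q; lra.
Qed.

Lemma seqcc_completion_gap (S T : {set C}) : seqcc_completion A k S T ->
  M - (cov A T)%:R <= q ^+ (k - #|S|) * (M - (cov A S)%:R).
Proof.
elim=> {S T} [S ->|S c T Sk cS c_greedy _ IH]; first by rewrite subnn expr0 mul1r.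
move: IH; rewrite cardsU1 cS add1n -(subnSK Sk) exprSr -mulrA => /le_trans; apply.
by rewrite ler_wpM2l ?exprn_ge0 ?q_ge0 ?greedy_gap.
Qed.

(* Double counting: the payments for [W] total [#|W|], and only voters covered
   by [W] pay for it, each at most [k/n]. *)
Lemma affordable_card_le (W : {set C}) : affordable A R k W ->
  #|W|%:R <= (cov A W)%:R * (k%:R / n%:R) :> R.
Proof.
move=> [p [p_ge0 p_appr p_budget p_W p_notW]].
have -> : #|W|%:R = \sum_(c in W) \sum_(i < n) p i c :> R.
  by rewrite -sum1_card natr_sum; apply: eq_bigr => c /p_W ->.
rewrite exchange_big /= mulr_natl -sumr_const.
rewrite (bigID (mem (covered A W))) /= [X in _ + X]big1 ?addr0 => [|i iW].
  apply: ler_sum => i _; apply: le_trans (p_budget i).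
  by rewrite [X in _ <= X](bigID (mem W)) /= lerDl sumr_ge0.
rewrite big1 // => c cW; apply: p_appr; apply: contra iW => ci.
by rewrite inE; apply/existsP; exists c; rewrite cW.
Qed.

Lemma affordable_gap (W : {set C}) : (0 < n)%N -> affordable A R k W ->
  M - (cov A W)%:R <= M * q ^+ #|W|.
Proof.
move=> n_gt0 /affordable_card_le Wcov.
have k_pos : 0 < k%:R :> R by rewrite ltr0n.
have n_pos : 0 < n%:R :> R by rewrite ltr0n.
have M_ge0 : 0 <= M by rewrite ler0n.
have Mw_le : M * (#|W|%:R * k%:R^-1) <= (cov A W)%:R.
  apply: le_trans (_ : n%:R * (#|W|%:R * k%:R^-1) <= _).
    by rewrite ler_wpM2r ?mulr_ge0 ?invr_ge0 ?ler0n // ler_nat maxcov_le_n.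
  have -> : n%:R * (#|W|%:R * k%:R^-1) = #|W|%:R / (k%:R / n%:R) :> R.
    by field; rewrite !gt_eqF.
  by rewrite ler_pdivrMr ?divr_gt0.
have := bernoulli_ineq #|W| (_ : -1 <= - k%:R^-1 :> R).
rewrite lerN2 invf_le1 ?ler1n // => /(_ k_gt0) /(ler_wpM2l M_ge0).
apply: le_trans; rewrite mulrN mulrDr mulr1 mulrN; lra.
Qed.

Lemma expn_q_le_expRN1 : q ^+ k <= expR (-1).
Proof.
have -> : -1 = k%:R * - k%:R^-1 :> R by rewrite mulrN natr_mulV.
by rewrite exprn_le_expR // lerN2 invf_le1 ?ltr0n ?ler1n.
Qed.

End Guarantee.

Theorem theorem5 (R : realType) (C : finType) (n : nat) (A : 'I_n -> {set C})
    (k : nat) (W Wbar : {set C}) :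
  (0 < n)%N -> (1 <= k)%N -> (k <= #|C|)%N ->
  (#|W| <= k)%N -> affordable A R k W ->
  seqcc_completion A k W Wbar ->
  (1 - (expR (1 : R))^-1) * (maxcov A k)%:R <= (cov A Wbar)%:R.
Proof.
move=> n_gt0 k_gt0 _ Wk W_aff W_Wbar.
set M : R := (maxcov A k)%:R; set q : R := 1 - k%:R^-1.
have M_ge0 : 0 <= M by rewrite ler0n.
have gap : M - (cov A Wbar)%:R <= q ^+ (k - #|W|) * (M * q ^+ #|W|).
  apply: le_trans (seqcc_completion_gap R k_gt0 W_Wbar) _.
  by apply: ler_wpM2l; [rewrite exprn_ge0 ?q_ge0 | apply: affordable_gap].
rewrite mulrCA -exprD subnK // in gap.
have := le_trans gap (ler_wpM2l M_ge0 (expn_q_le_expRN1 R k_gt0)).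
rewrite expRN; lra.
Qed.
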